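(* Let $s$ be an integer with $\gcd(s,n)=1$ and let $\mathcal C\subseteq\mathcal L_{n,q}$ be an $\mathbb F_{q^n}$-linear MRD code of dimension $k$ containing the code $\mathcal G=\langle p(x),p(x)^{[s]},\ldots,p(x)^{[s(k-2)]}\rangle_{\mathbb F_{q^n}}$ (equivalent to $\mathcal G_{k-1,s}$), where $p(x)$ is an invertible linearized polynomial. Suppose there is $g(x)\in\mathcal C\setminus\mathcal G$ with $g(x)\in\langle p(x)^{[-s]},p(x)^{[s(k-1)]}\rangle_{\mathbb F_{q^n}}$ of the form $g(x)=p(x)^{[-s]}+\eta\,p(x)^{[s(k-1)]}$, where $\eta\in\mathbb F_{q^n}$ and $\mathrm N_{q^n/q}(\eta)\neq(-1)^{kn}$. Then $\mathcal C$ is equivalent to $\mathcal H_{k,s}(\eta^{[s]})$.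
   Context: $q$ is a prime power, $[i]:=q^i$ (exponents of $[\,\cdot\,]$ read modulo $n$, so $[-s]=[n-s]$). $\mathcal L_{n,q}$ is the $\mathbb F_{q^n}$-vector space of linearized polynomials $f(x)=\sum_{i=0}^{n-1}a_ix^{[i]}$, $a_i\in\mathbb F_{q^n}$, identified with $\mathbb F_q$-linear maps of $\mathbb F_{q^n}$. For $f(x)=\sum_i a_ix^{[i]}$, $f(x)^{[j]}:=x^{[j]}\circ f(x)=\sum_i a_i^{[j]}x^{[(i+j)\bmod n]}$. A code $\mathcal C\subseteq\mathcal L_{n,q}$ (an $\mathbb F_q$-subspace with rank distance $\mathrm{rk}(f-g)$ and minimum distance $d$) is MRD if $|\mathcal C|=q^{n(n-d+1)}$. $\mathrm N_{q^n/q}(\eta)=\prod_{i=0}^{n-1}\eta^{[i]}$. $\mathcal G_{k,s}=\langle x,\ldots,x^{[s(k-1)]}\rangle_{\mathbb F_{q^n}}$ and $\mathcal H_{k,s}(\eta)=\langle x+\eta x^{[sk]},x^{[s]},\ldots,x^{[s(k-1)]}\rangle_{\mathbb F_{q^n}}$. Codes $\mathcal C,\mathcal C'$ are equivalent if there are invertible $h,g\in\mathcal L_{n,q}$ and a field automorphism $\sigma$ (acting on coefficients) with $\{h\circ f^\sigma\circ g\colon f\in\mathcal C\}=\mathcal C'$. *)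

(* Linearized polynomials over L = F_{q^n} are represented
   by their coefficient row vectors 'rV[L]_n : f = \sum_i f 0 i x^[i]. *)
From HB Require Import structures.
From mathcomp Require Import all_boot all_order all_algebra.
Set Implicit Arguments.
Unset Strict Implicit.
Unset Printing Implicit Defensive.
Import GRing.Theory.
Local Open Scope ring_scope.

Definition prime_power (q : nat) : Prop :=
  exists p e : nat, [/\ prime p, (0 < e)%N & q = (p ^ e)%N].

Section LinPoly.
Variables (L : finFieldType) (q n : nat).

(* exponent j of [j] = q^j, read modulo n (so [-s] = [n-s]) *)
Definition fexp (j : int) : nat := `|(j %% n%:Z)%Z|%N.

Definition qpow (a : L) (j : int) : L := a ^+ (q ^ fexp j).

(* f^[j] := x^[j] o f = \sum_i a_i^[j] x^[(i+j) mod n] *)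
Definition lfrob (j : int) (f : 'rV[L]_n) : 'rV[L]_n :=
  \row_(m < n) \sum_(i < n | ((i + fexp j) %% n == m)%N) qpow (f 0 i) j.

Definition lid : 'rV[L]_n := \row_(m < n) ((m == 0%N :> nat)%:R : L).

Definition lmono (j : int) : 'rV[L]_n := lfrob j lid.

Definition lcomp (h f : 'rV[L]_n) : 'rV[L]_n :=
  \sum_(j < n) h 0 j *: lfrob (Posz j) f.

Definition lev (f : 'rV[L]_n) (x : L) : L :=
  \sum_(i < n) f 0 i * x ^+ (q ^ i).

(* rank = dim_{F_q} of the image = log_q |im f| *)
Definition lrank (f : 'rV[L]_n) : nat := trunc_log q #|[set lev f x | x : L]|.

Definition linvertible (h : 'rV[L]_n) : Prop :=
  exists g : 'rV[L]_n, lcomp g h = lid /\ lcomp h g = lid.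

Definition lnorm (eta : L) : L := \prod_(i < n) eta ^+ (q ^ i).

Definition min_dist (C : {vspace 'rV[L]_n}) (d : nat) : Prop :=
  (exists f g, [/\ f \in C, g \in C, f != g & lrank (f - g) = d]) /\
  (forall f g, f \in C -> g \in C -> f != g -> (d <= lrank (f - g))%N).

Definition MRD (C : {vspace 'rV[L]_n}) : Prop :=
  exists d, min_dist C d /\
    #|[set f : 'rV[L]_n | f \in C]| = (q ^ (n * (n - d + 1)))%N.

Definition Gcode (k : nat) (s : int) : {vspace 'rV[L]_n} :=
  <<[seq lmono (s * i%:Z) | i <- iota 0 k]>>%VS.

Definition Hcode (k : nat) (s : int) (eta : L) : {vspace 'rV[L]_n} :=
  <<cons (lid + eta *: lmono (s * k%:Z))%R
      [seq lmono (s * i%:Z) | i <- iota 1 k.-1]>>%VS.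

Definition code_equiv (C C' : {vspace 'rV[L]_n}) : Prop :=
  exists (h g : 'rV[L]_n) (sigma : {rmorphism L -> L}),
    [/\ linvertible h, linvertible g, bijective sigma,
        forall f, f \in C -> lcomp h (lcomp (map_mx sigma f) g) \in C' &
        forall f', f' \in C' ->
          exists2 f, f \in C & f' = lcomp h (lcomp (map_mx sigma f) g)].

End LinPoly.

(* Right composition with p^{-1} followed by left composition with x^[s] is a
   code equivalence (with trivial field automorphism). It sends p^[si] to
   x^[s(i+1)] and g = p^[-s] + eta p^[s(k-1)] to x + eta^[s] x^[sk], i.e. the
   generators of G and g onto the generators of H_{k,s}(eta^[s]). These k
   elements span C: the monomials x^[s], ..., x^[s(k-1)] are distinct since
   gcd(s,n) = 1, so G has dimension k-1, and g lies outside G. *)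

From HB Require Import structures.
From mathcomp Require Import all_boot all_order all_algebra finfield.
Import GRing.Theory.
Set Implicit Arguments.
Unset Strict Implicit.
Unset Printing Implicit Defensive.
Local Open Scope ring_scope.

Section SemilinearMap.
Variables (K : fieldType) (vT wT : vectType K) (F : vT -> wT) (sg : K -> K).
Hypotheses (FD : {morph F : u v / u + v}) (FZ : forall a v, F (a *: v) = sg a *: F v).

Lemma semilinear0 : F 0 = 0.
Proof. by apply: (addrI (F 0)); rewrite -FD !addr0. Qed.

Lemma memv_span_map (X : seq vT) v : v \in <<X>>%VS -> F v \in <<map F X>>%VS.
Proof.
move=> /(@coord_span _ _ _ (in_tuple X)) ->.
rewrite (big_morph F FD semilinear0); apply: memv_suml => i _.
by rewrite FZ memvZ // memv_span // map_f // mem_nth.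
Qed.

Lemma free_map_semilinear (X : seq vT) :
  (forall a, sg a = 0 -> a = 0) -> free (map F X) -> free X.
Proof.
move=> sg_eq0 FX; apply/(freeP (X := in_tuple X)) => c c0 i; apply: sg_eq0.
have /freeP freeFX : free (map_tuple F (in_tuple X)) := FX.
apply: (freeFX (fun j => sg (c j))).
transitivity (F (\sum_(j < size X) c j *: X`_j)); last by rewrite c0 semilinear0.
rewrite (big_morph F FD semilinear0); apply: eq_bigr => j _.
by rewrite FZ (nth_map 0).
Qed.

End SemilinearMap.

Lemma span_cons_eq_dim (K : fieldType) (vT : vectType K) (U : {vspace vT}) v X :
  v \in U -> (<<X>> <= U)%VS -> v \notin <<X>>%VS -> free X ->
  \dim U = (size X).+1 -> U = <<v :: X>>%VS.
Proof.
move=> vU XU vX freeX dimU; apply/eqP; rewrite eq_sym eqEdim.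
have freevX : free (v :: X) by rewrite free_cons vX.
rewrite (eqP freevX) dimU leqnn andbT.
by rewrite span_cons subv_add -memvE vU XU.
Qed.

Lemma prime_power_gt1 q : prime_power q -> (1 < q)%N.
Proof.
by move=> [p [e [p_pr e_gt0 ->]]]; rewrite -{1}(expn0 p) ltn_exp2l ?prime_gt1.
Qed.

Section LinearizedPolynomials.
Variables (L : finFieldType) (q n : nat).
Hypotheses (q_pp : prime_power q) (n_gt0 : (0 < n)%N) (cardL : #|L| = (q ^ n)%N).

Let q_gt1 : (1 < q)%N := prime_power_gt1 q_pp.

Lemma frobD e (a b : L) : (a + b) ^+ (q ^ e) = a ^+ (q ^ e) + b ^+ (q ^ e).
Proof.
have [p [m [p_pr _ qE]]] := q_pp.
have pL : p \in [pchar L].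
  by apply: (@card_finPcharP _ _ (m * n)) => //; rewrite cardL qE expnM.
apply: exprDn_pchar; rewrite (eq_pnat _ (pcharf_eq pL)) qE -expnM pnatX.
by rewrite pnat_id.
Qed.

Lemma frob0 e : (0 : L) ^+ (q ^ e) = 0.
Proof. by rewrite expr0n expn_eq0 eqn0Ngt (ltn_trans _ q_gt1). Qed.

Lemma frob_sum e (I : Type) (r : seq I) (P : pred I) (F : I -> L) :
  (\sum_(i <- r | P i) F i) ^+ (q ^ e) = \sum_(i <- r | P i) F i ^+ (q ^ e).
Proof. exact: (big_morph (fun a : L => a ^+ (q ^ e)) (frobD e) (frob0 e)). Qed.

Lemma frob_modn e (a : L) : a ^+ (q ^ e) = a ^+ (q ^ (e %% n)).
Proof.
rewrite {1}(divn_eq e n); elim: (e %/ n)%N => [|m IHm]; first by rewrite add0n.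
by rewrite mulSn -addnA expnD exprM -cardL expf_card.
Qed.

Lemma fexp_lt j : (fexp n j < n)%N.
Proof.
have n_neq0 : n%:Z != 0 by rewrite eqz_nat -lt0n.
by rewrite /fexp -ltz_nat gez0_abs ?modz_ge0 // ltz_pmod // ltz_nat.
Qed.

Lemma fexpE j : (fexp n j)%:Z = (j %% n%:Z)%Z.
Proof.
have n_neq0 : n%:Z != 0 by rewrite eqz_nat -lt0n.
by rewrite /fexp gez0_abs ?modz_ge0.
Qed.

Lemma fexpD i j : fexp n (i + j) = ((fexp n i + fexp n j) %% n)%N.
Proof. by apply/eqP; rewrite -eqz_nat fexpE -modz_nat PoszD !fexpE modzDm. Qed.

Lemma fexp_nat m : fexp n m%:Z = (m %% n)%N.
Proof. by apply/eqP; rewrite -eqz_nat fexpE modz_nat. Qed.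

Lemma fexp0 : fexp n 0 = 0%N.
Proof. by rewrite fexp_nat mod0n. Qed.

Lemma fexp_mulz_inj (s : int) i j : gcdz s n%:Z = 1%N -> (i < n)%N -> (j < n)%N ->
  fexp n (s * i%:Z) = fexp n (s * j%:Z) -> i = j.
Proof.
move=> s_coprime i_lt j_lt /(congr1 Posz); rewrite !fexpE => /eqP.
rewrite eqz_mod_dvd -mulrBr Gauss_dvdzr; last by rewrite /coprimez gcdzC s_coprime.
by rewrite -eqz_mod_dvd !modz_nat !modn_small // => /eqP [].
Qed.

Lemma frob_fexpD i j (a : L) :
  (a ^+ (q ^ fexp n i)) ^+ (q ^ fexp n j) = a ^+ (q ^ fexp n (i + j)).
Proof. by rewrite -exprM -expnD fexpD -frob_modn. Qed.

Lemma frob_fexp0 (a : L) : a ^+ (q ^ fexp n 0) = a.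
Proof. by rewrite fexp0 expn0 expr1. Qed.

Lemma lev0 x : lev q (0 : 'rV[L]_n) x = 0.
Proof. by rewrite /lev big1 // => i _; rewrite mxE mul0r. Qed.

Lemma levD (f g : 'rV[L]_n) x : lev q (f + g) x = lev q f x + lev q g x.
Proof. by rewrite /lev -big_split; apply: eq_bigr => i _; rewrite mxE mulrDl. Qed.

Lemma levZ a (f : 'rV[L]_n) x : lev q (a *: f) x = a * lev q f x.
Proof. by rewrite /lev mulr_sumr; apply: eq_bigr => i _; rewrite mxE mulrA. Qed.

Lemma levB (f g : 'rV[L]_n) x : lev q (f - g) x = lev q f x - lev q g x.
Proof. by rewrite levD -scaleN1r levZ mulN1r. Qed.

Lemma lev_sum (I : Type) (r : seq I) (P : pred I) (F : I -> 'rV[L]_n) x :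
  lev q (\sum_(i <- r | P i) F i) x = \sum_(i <- r | P i) lev q (F i) x.
Proof. exact: (big_morph (fun f => lev q f x) (fun f g => levD f g x) (lev0 x)). Qed.

Lemma lev_lid x : lev q (lid L n) x = x.
Proof.
rewrite /lev (bigD1 (Ordinal n_gt0)) //= big1 ?addr0; first by rewrite mxE mul1r expr1.
by move=> i /negbTE i_neq0; rewrite mxE -val_eqE /= in i_neq0 *; rewrite i_neq0 mul0r.
Qed.

Lemma lev_lfrob j (f : 'rV[L]_n) x :
  lev q (lfrob q j f) x = lev q f x ^+ (q ^ fexp n j).
Proof.
rewrite /lev frob_sum; under eq_bigr => m _ do rewrite mxE mulr_suml.
rewrite (exchange_big_dep xpredT) //=; apply: eq_bigr => i _.
rewrite (big_pred1 (Ordinal (ltn_pmod (i + fexp n j) n_gt0))); last first.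
  by move=> m /=; rewrite eq_sym.
by rewrite /= -frob_modn expnD exprM /qpow exprMn.
Qed.

Lemma lev_lmono j x : lev q (lmono L q n j) x = x ^+ (q ^ fexp n j).
Proof. by rewrite lev_lfrob lev_lid. Qed.

Lemma lev_lcomp (h f : 'rV[L]_n) x : lev q (lcomp q h f) x = lev q h (lev q f x).
Proof.
rewrite lev_sum {2}/lev; apply: eq_bigr => j _.
by rewrite levZ lev_lfrob fexp_nat modn_small.
Qed.

Lemma lev_eq0 (h : 'rV[L]_n) : (forall x, lev q h x = 0) -> h = 0.
Proof.
move=> h0; pose P : {poly L} := \sum_(i < n) h 0 i *: 'X^(q ^ i).
have coefP m : P`_m = \sum_(i < n) h 0 i * (m == q ^ i)%N%:R.
  by rewrite coef_sum; apply: eq_bigr => i _; rewrite coefZ coefXn.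
have P0 : P = 0.
  apply/eqP; apply: contraT => P_neq0.
  have rootsP : all (root P) (enum L).
    apply/allP => x _; rewrite /root -(h0 x) horner_sum.
    by apply/eqP/eq_bigr => i _; rewrite hornerZ hornerXn.
  suff size_le : (size P <= q ^ n)%N.
    have := max_poly_roots P_neq0 rootsP (enum_uniq L).
    by rewrite -cardE cardL ltnNge size_le.
  apply: leq_trans (_ : (q ^ n.-1).+1 <= _)%N; last by rewrite ltn_exp2l ?ltn_predL.
  apply/leq_sizeP => m m_gt; rewrite coefP big1 // => i _.
  have le_qi : (q ^ i <= q ^ n.-1)%N by rewrite leq_pexp2l ?(ltnW q_gt1) // -ltnS prednK.
  by rewrite gtn_eqF ?mulr0 // (leq_ltn_trans le_qi).
apply/rowP => i; rewrite mxE; have := coefP (q ^ i)%N.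
rewrite P0 coef0 (bigD1 i) //= eqxx mulr1 big1 ?addr0 => [<-//|j j_neq_i].
by rewrite eqn_exp2l // val_eqE eq_sym (negbTE j_neq_i) mulr0.
Qed.

Lemma lev_inj (f g : 'rV[L]_n) : (forall x, lev q f x = lev q g x) -> f = g.
Proof.
move=> fg; apply/eqP; rewrite -subr_eq0; apply/eqP/lev_eq0 => x.
by rewrite levB fg subrr.
Qed.

Lemma lmono_delta j : lmono L q n j = delta_mx 0 (Ordinal (fexp_lt j)).
Proof.
apply: lev_inj => x; rewrite lev_lmono /lev (bigD1 (Ordinal (fexp_lt j))) //=.
rewrite big1 ?addr0; first by rewrite mxE !eqxx mul1r.
by move=> i i_neq; rewrite mxE eqxx /= (negbTE i_neq) mul0r.
Qed.

Lemma lmono0 : lmono L q n 0 = lid L n.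
Proof. by apply: lev_inj => x; rewrite lev_lmono frob_fexp0 lev_lid. Qed.

Lemma free_lmono (js : seq int) :
  uniq [seq fexp n j | j <- js] -> free [seq lmono L q n j | j <- js].
Proof.
move=> js_uniq; apply/(freeP (X := in_tuple _)) => c c0 i.
have i_lt : (i < size js)%N by rewrite -(size_map (lmono L q n)) ltn_ord.
have := congr1 (fun v : 'rV_n => v 0 (Ordinal (fexp_lt js`_i))) c0.
rewrite summxE mxE (bigD1 i) //= big1 ?addr0.
  by rewrite (nth_map 0) // lmono_delta !mxE !eqxx mulr1.
move=> j j_neq_i.
rewrite (nth_map 0) -?(size_map (lmono L q n)) // lmono_delta !mxE eqxx /=.
case: eqP => [/(congr1 val) /= fexp_eq|]; last by rewrite mulr0.
have j_lt : (j < size js)%N by rewrite -(size_map (lmono L q n)) ltn_ord.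
move: j_neq_i; rewrite -val_eqE -(nth_uniq 0%N _ _ js_uniq).
- by rewrite !(nth_map 0) // fexp_eq eqxx.
- by rewrite (size_map (fexp n)).
- by rewrite (size_map (fexp n)).
Qed.

Lemma free_lmono_mulz (s : int) a m : gcdz s n%:Z = 1%N -> (a + m <= n)%N ->
  free [seq lmono L q n (s * i%:Z) | i <- iota a m].
Proof.
move=> s_coprime am_le; rewrite (map_comp (lmono L q n) (fun i : nat => s * i%:Z)).
apply: free_lmono; rewrite -map_comp map_inj_in_uniq ?iota_uniq // => i j.
rewrite !mem_iota => /andP[_ i_lt] /andP[_ j_lt].
by apply: fexp_mulz_inj; rewrite // (leq_trans _ am_le).
Qed.

Definition equiv_map (h g f : 'rV[L]_n) : 'rV[L]_n := lcomp q h (lcomp q f g).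

Lemma lev_equiv_map h g f x : lev q (equiv_map h g f) x = lev q h (lev q f (lev q g x)).
Proof. by rewrite !lev_lcomp. Qed.

Section MonomialEquivalence.
Variables (j : int) (g g' : 'rV[L]_n).
Hypothesis gg' : lcomp q g g' = lid L n.

Lemma equiv_map_lmonoD : {morph equiv_map (lmono L q n j) g : u v / u + v}.
Proof.
by move=> u v; apply: lev_inj => x; rewrite levD !lev_equiv_map !lev_lmono levD frobD.
Qed.

Lemma equiv_map_lmonoZ a f :
  equiv_map (lmono L q n j) g (a *: f) = qpow q n a j *: equiv_map (lmono L q n j) g f.
Proof. by apply: lev_inj => x; rewrite levZ !lev_equiv_map !lev_lmono levZ exprMn. Qed.

Lemma equiv_map_lmonoK :
  cancel (equiv_map (lmono L q n j) g) (equiv_map (lmono L q n (- j)) g').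
Proof.
move=> f; apply: lev_inj => x.
rewrite !lev_equiv_map !lev_lmono -[lev q g (lev q g' x)]lev_lcomp gg' lev_lid.
by rewrite frob_fexpD subrr frob_fexp0.
Qed.

End MonomialEquivalence.

Lemma linvertible_lmono j : linvertible q (lmono L q n j).
Proof.
exists (lmono L q n (- j)); split; apply: lev_inj => x;
  by rewrite lev_lcomp !lev_lmono lev_lid frob_fexpD ?subrr ?addNr frob_fexp0.
Qed.

Lemma code_equiv_span j (g g' : 'rV[L]_n) (X : seq 'rV[L]_n) :
  lcomp q g g' = lid L n -> lcomp q g' g = lid L n ->
  code_equiv q <<X>>%VS <<map (equiv_map (lmono L q n j) g) X>>%VS.
Proof.
move=> gg' g'g; pose id_rmorph : {rmorphism L -> L} := idfun.
have map_id_rmorph (f : 'rV[L]_n) : map_mx id_rmorph f = f by exact: map_mx_id.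
have PhiK := equiv_map_lmonoK j gg'.
have PsiK := equiv_map_lmonoK (- j) g'g; rewrite opprK in PsiK.
exists (lmono L q n j), g, id_rmorph; split.
- exact: linvertible_lmono.
- by exists g'.
- by exists idfun.
- move=> f; rewrite map_id_rmorph.
  exact: (memv_span_map (equiv_map_lmonoD j g) (equiv_map_lmonoZ j g)).
- move=> f' f'X; exists (equiv_map (lmono L q n (- j)) g' f').
    have := memv_span_map (equiv_map_lmonoD (- j) g') (equiv_map_lmonoZ (- j) g') f'X.
    by rewrite -map_comp (eq_map PhiK) map_id.
  by rewrite map_id_rmorph; symmetry; apply: PsiK.
Qed.

Lemma equiv_map_lfrob (p p' : 'rV[L]_n) i j : lcomp q p p' = lid L n ->
  equiv_map (lmono L q n j) p' (lfrob q i p) = lmono L q n (i + j).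
Proof.
move=> pp'; apply: lev_inj => x.
by rewrite lev_equiv_map !lev_lmono lev_lfrob -lev_lcomp pp' lev_lid frob_fexpD.
Qed.

Section FrobeniusPowersOfInvertible.
Variables (p p' : 'rV[L]_n) (s : int).
Hypothesis pp' : lcomp q p p' = lid L n.

Lemma map_equiv_map_lfrob m :
  map (equiv_map (lmono L q n s) p') [seq lfrob q (s * i%:Z) p | i <- iota 0 m]
  = [seq lmono L q n (s * i%:Z) | i <- iota 1 m].
Proof.
rewrite (iotaDl 1 0) -!map_comp; apply: eq_map => i /=.
by rewrite (equiv_map_lfrob _ _ pp') PoszD addrC mulrDr mulr1.
Qed.

Lemma equiv_map_lfrob_pencil (eta : L) m :
  equiv_map (lmono L q n s) p' (lfrob q (- s) p + eta *: lfrob q (s * m%:Z) p)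
  = lid L n + qpow q n eta s *: lmono L q n (s * m.+1%:Z).
Proof.
rewrite equiv_map_lmonoD equiv_map_lmonoZ !(equiv_map_lfrob _ _ pp').
by rewrite addNr lmono0 intS mulrDr mulr1 (addrC s).
Qed.

Lemma free_lfrob_mulz m : gcdz s n%:Z = 1%N -> (m < n)%N ->
  free [seq lfrob q (s * i%:Z) p | i <- iota 0 m].
Proof.
move=> s_coprime m_lt.
apply: (free_map_semilinear (equiv_map_lmonoD s p') (equiv_map_lmonoZ s p')).
  by move=> a /eqP; rewrite expf_eq0 => /andP[_ /eqP].
by rewrite map_equiv_map_lfrob free_lmono_mulz // add1n.
Qed.

End FrobeniusPowersOfInvertible.

End LinearizedPolynomials.

Theorem lemma3p8 (L : finFieldType) (q n k : nat) (s : int)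
    (C : {vspace 'rV[L]_n}) (p : 'rV[L]_n) (eta : L) :
  prime_power q -> (0 < n)%N -> #|L| = (q ^ n)%N ->
  gcdz s n%:Z = 1%N ->
  \dim C = k -> MRD q C ->
  linvertible q p ->
  let G := <<[seq lfrob q (s * i%:Z) p | i <- iota 0 k.-1]>>%VS in
  (G <= C)%VS ->
  (exists2 g, (g \in C) && (g \notin G) &
     g = lfrob q (- s) p + eta *: lfrob q (s * (k.-1)%:Z) p) ->
  lnorm q n eta != (-1) ^+ (k * n) ->
  code_equiv q C (Hcode q n k s (qpow q n eta s)).
Proof.
move=> q_pp n_gt0 cardL s_coprime dimC _ [p' [p'p pp']] G GC [g /andP[gC gG] gE] _.
have k_gt0 : (0 < k)%N.
  rewrite lt0n; apply: contraNneq gG => k0; move: dimC gC; rewrite k0 => /eqP.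
  by rewrite dimv_eq0 => /eqP ->; rewrite memv0 => /eqP ->; apply: mem0v.
have k_le_n : (k <= n)%N.
  by rewrite -dimC; have := dimvS (subvf C); rewrite dimvf /dim /= mul1n.
case: k k_gt0 k_le_n dimC @G GC gG gE => // k' _ k_lt_n dimC G GC gG gE /=.
set X := [seq lfrob q (s * i%:Z) p | i <- iota 0 k'] in G GC gG *.
have freeX : free X := free_lfrob_mulz q_pp n_gt0 cardL pp' s_coprime k_lt_n.
have -> : C = <<g :: X>>%VS.
  by apply: span_cons_eq_dim; rewrite // dimC size_map size_iota.
have := code_equiv_span q_pp n_gt0 cardL s (g :: X) p'p pp'.
by rewrite /= map_equiv_map_lfrob // gE equiv_map_lfrob_pencil.
Qed.
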